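(* Let $\mathscr{A}=(Q,\{0,1\},\delta)$ be an NFA with $Q=\{q_1,\dots,q_n\}$ and let $\ell>0$ be an integer. For every $t=0,1,\dots,\ell$, every truth assignment $\varphi$ on the set $X=\{x_1,\dots,x_\ell\}$ of letter variables has a unique extension $\overline{\varphi}$ to the token variables $y_{ij}^s$ ($i,j=1,\dots,n$, $s=0,\dots,t$) that makes all clauses in $C_0$ and all formulas $\Psi_{ij}^s$ ($i,j=1,\dots,n$, $s=1,\dots,t$) true. Moreover, the token variable $y_{ij}^s$ gets value $1$ under $\overline{\varphi}$ if and only if after the moves $\varphi(x_1),\dots,\varphi(x_s)$ of the game $\Gamma$, one of the tokens held by the state $q_j$ is $\mathbf{i}$ (equivalently, $q_j\in q_i.\varphi(x_1)\cdots\varphi(x_s)$).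
   Context: An NFA is $\mathscr{A}=(Q,\Sigma,\delta)$ with $\delta\colon Q\times\Sigma\to\mathcal{P}(Q)$; $\delta$ extends to words by $\delta(X,\varepsilon)=X$ and $\delta(X,sw')=\bigcup_{q\in X}\delta(\delta(q,s),w')$, written $q.w=\delta(\{q\},w)$. The game $\Gamma$: initially each state $q_i$ holds exactly one token $\mathbf{i}$; at each move a symbol $a$ is chosen, and after the move token $\mathbf{i}$ is at state $p$ iff $p\in q.a$ for some state $q$ that held $\mathbf{i}$ just before the move (tokens at states $q$ with $q.a=\varnothing$ disappear). Variables: letter variables $x_1,\dots,x_\ell$ and token variables $y_{ij}^t$ for $i,j\in\{1,\dots,n\}$, $t\in\{0,\dots,\ell\}$. For $a\in\{0,1\}$ and $q\in Q$, let $P_a(q)=\{p\in Q\mid q\in p.a\}$. $C_0$ is the set of one-literal clauses $y_{ii}^0$ ($i=1,\dots,n$) and $\neg y_{ij}^0$ ($i\neq j$). For $t=1,\dots,\ell$ and $i,j=1,\dots,n$, $\Psi_{ij}^t$ is the propositional formula $y_{ij}^t\Longleftrightarrow\bigl(x_t\wedge\bigvee_{q_k\in P_1(q_j)}y_{ik}^{t-1}\bigr)\vee\bigl(\neg x_t\wedge\bigvee_{q_h\in P_0(q_j)}y_{ih}^{t-1}\bigr)$, where an empty disjunction is false. A truth assignment with $x_t\mapsto a$ is identified with choosing symbol $a$ at the $t$-th move. *)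

From mathcomp Require Import all_boot.
Set Implicit Arguments. Unset Strict Implicit. Unset Printing Implicit Defensive.

(* States q_1..q_n are represented by 'I_n (q_{i+1} ~ i); alphabet {0,1} is bool
   (false = 0, true = 1). *)
Definition nfa (n : nat) := 'I_n -> bool -> {set 'I_n}.

Definition dset n (d : nfa n) (X : {set 'I_n}) (a : bool) : {set 'I_n} :=
  \bigcup_(q in X) d q a.
Definition dword n (d : nfa n) (X : {set 'I_n}) (w : seq bool) : {set 'I_n} :=
  foldl (dset d) X w.

Definition Pre n (d : nfa n) (a : bool) (q : 'I_n) : {set 'I_n} :=
  [set p | q \in d p a].

(* a truth assignment phi on x_1..x_ell: x_t |-> phi (t-1) *)
Definition letters ell (phi : 'I_ell -> bool) : seq bool := [seq phi i | i <- enum 'I_ell].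
Definition xval ell (phi : 'I_ell -> bool) (t : nat) : bool := nth false (letters phi) t.-1.

(* y s i j : value of token variable y_{ij}^s ; clauses C_0 and formulas Psi_{ij}^s
   for s = 1..t hold *)
Definition C0_holds n (y : nat -> 'I_n -> 'I_n -> bool) : Prop :=
  (forall i, y 0 i i) /\ (forall i j, i != j -> ~~ y 0 i j).

Definition Psi_holds n (d : nfa n) ell (phi : 'I_ell -> bool)
    (y : nat -> 'I_n -> 'I_n -> bool) (s : nat) (i j : 'I_n) : Prop :=
  y s i j = (xval phi s && [exists k in Pre d true j, y s.-1 i k])
            || (~~ xval phi s && [exists h in Pre d false j, y s.-1 i h]).

Definition extension_ok n (d : nfa n) ell (phi : 'I_ell -> bool) (t : nat)
    (y : nat -> 'I_n -> 'I_n -> bool) : Prop :=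
  C0_holds y /\ (forall s i j, 1 <= s <= t -> Psi_holds d phi y s i j).

From mathcomp Require Import all_boot.
Set Implicit Arguments. Unset Strict Implicit. Unset Printing Implicit Defensive.

(* The formulas Psi say that y^s is obtained from y^(s-1) by one step of the
   subset construction on the letter x_s, and C_0 fixes y^0 to the identity
   relation; so by induction on s every satisfying extension records, in row i,
   the set of states reached from q_i by the first s letters.  This set also
   provides the extension, which is therefore unique. *)

Lemma dword_rcons n (d : nfa n) (X : {set 'I_n}) (w : seq bool) (a : bool) :
  dword d X (rcons w a) = dset d (dword d X w) a.
Proof. exact: foldl_rcons. Qed.

Lemma mem_dset n (d : nfa n) (X : {set 'I_n}) (a : bool) (j : 'I_n) :
  (j \in dset d X a) = [exists k in Pre d a j, k \in X].
Proof.
apply/bigcupP/existsP => [[k kX jk] | [k /andP[]]].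
  by exists k; rewrite inE jk.
by rewrite inE => jk kX; exists k.
Qed.

Section TokenVariables.

Variables (n : nat) (d : nfa n) (ell : nat) (phi : 'I_ell -> bool).

Definition reach (s : nat) (i j : 'I_n) : bool :=
  j \in dword d [set i] (take s (letters phi)).

Lemma size_letters : size (letters phi) = ell.
Proof. by rewrite size_map size_enum_ord. Qed.

Lemma reach0 (i j : 'I_n) : reach 0 i j = (j == i).
Proof. by rewrite /reach take0 inE. Qed.

Lemma reachS (s : nat) (i j : 'I_n) : s < ell ->
  reach s.+1 i j = [exists k in Pre d (xval phi s.+1) j, reach s i k].
Proof.
move=> lt_s_ell.
by rewrite /reach /xval (take_nth false) ?size_letters // dword_rcons mem_dset.
Qed.

Lemma Psi_holdsE (y : nat -> 'I_n -> 'I_n -> bool) (s : nat) (i j : 'I_n) :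
  Psi_holds d phi y s i j <->
  y s i j = [exists k in Pre d (xval phi s) j, y s.-1 i k].
Proof. by rewrite /Psi_holds; case: (xval phi s); rewrite /= ?orbF. Qed.

Lemma extension_ok_reach (t : nat) : t <= ell -> extension_ok d phi t reach.
Proof.
move=> le_t_ell; split; first split.
- by move=> i; rewrite reach0.
- by move=> i j; rewrite reach0 eq_sym.
case=> [//|s] i j /andP[_ le_s_t]; apply/Psi_holdsE.
exact/reachS/(leq_trans le_s_t).
Qed.

Lemma extension_okE (t : nat) (y : nat -> 'I_n -> 'I_n -> bool) :
  t <= ell -> extension_ok d phi t y ->
  forall s i j, s <= t -> y s i j = reach s i j.
Proof.
move=> le_t_ell [[y0_diag y0_offdiag] Psi_y].
elim=> [|s IHs] i j le_s_t.
  rewrite reach0; case: eqP => [->|/eqP ne_ji]; first exact: y0_diag.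
  by apply/negbTE/y0_offdiag; rewrite eq_sym.
rewrite reachS ?(leq_trans le_s_t) //.
have /Psi_holdsE -> : Psi_holds d phi y s.+1 i j by apply: Psi_y; rewrite le_s_t.
by apply: eq_existsb => k; rewrite IHs // ltnW.
Qed.

End TokenVariables.

Theorem lemma2 (n : nat) (d : nfa n) (ell : nat) (hell : 0 < ell)
    (t : nat) (ht : t <= ell) (phi : 'I_ell -> bool) :
  (exists y, extension_ok d phi t y) /\
  (forall y1 y2, extension_ok d phi t y1 -> extension_ok d phi t y2 ->
     forall s i j, s <= t -> y1 s i j = y2 s i j) /\
  (forall y, extension_ok d phi t y ->
     forall s i j, s <= t ->
       y s i j = (j \in dword d [set i] (take s (letters phi)))).
Proof.
split; last split.
- by exists (reach d phi); apply: extension_ok_reach.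
- move=> y1 y2 ok_y1 ok_y2 s i j le_s_t.
  by rewrite (extension_okE ht ok_y1) // (extension_okE ht ok_y2).
- by move=> y ok_y; apply: extension_okE ok_y.
Qed.
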